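(* Let $(X,Y,\phi)$ be an $L$-context and $Y'\subseteq Y$. The following are equivalent: (i) $Y\setminus Y'$ is $\phi$-reducible in RST, i.e. for every $\lambda\in L^Y$ there is $\lambda'\in L^{Y'}$ with $\phi^\forall\lambda=(\phi_{X,Y'})^\forall\lambda'$; (ii) $\phi^\forall\lambda=(\phi_{X,Y'})^\forall\big((\phi^\exists\phi^\forall\lambda)_{Y'}\big)$ for all $\lambda\in L^Y$; (iii) $\phi^\forall\phi^\exists=(\phi_{X,Y'})^\forall(\phi_{X,Y'})^\exists$ as maps $L^X\to L^X$; (iv) $\mathcal{K}\phi=\mathcal{K}\phi_{X,Y'}$ and the map $\mathcal{K}\phi\to\mathcal{K}\phi_{X,Y'}$, $\mu\mapsto(\phi_{X,Y'})^\forall(\phi_{X,Y'})^\exists\mu$, is the identity.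
   Context: $L=(L,* )$ is a complete residuated lattice: a complete lattice with bottom $0$ and top $1$, equipped with a commutative associative operation $*$ with unit $1$ satisfying $a*\bigvee_i b_i=\bigvee_i a*b_i$; $\to$ is its residuum ($a*b\le c\iff a\le b\to c$). An $L$-context is a triple $(X,Y,\phi)$ with $X,Y$ sets and $\phi\colon X\times Y\to L$. $L^X$ is the set of maps $X\to L$. $(\phi^\exists\mu)(y)=\bigvee_{x\in X}\mu(x)*\phi(x,y)$ for $\mu\in L^X$, $(\phi^\forall\lambda)(x)=\bigwedge_{y\in Y}(\phi(x,y)\to\lambda(y))$ for $\lambda\in L^Y$. $\mathcal{K}\phi=\{\mu\in L^X\mid\phi^\forall\phi^\exists\mu=\mu\}$. $\phi_{X,Y'}$ is the restriction of $\phi$ to $X\times Y'$; $\lambda_{Y'}$ the restriction of $\lambda\in L^Y$ to $Y'$. *)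

Set Implicit Arguments.

Record CRL := {
  car :> Type;
  le : car -> car -> Prop;
  sup : (car -> Prop) -> car;
  inf : (car -> Prop) -> car;
  mul : car -> car -> car;
  res : car -> car -> car;
  one : car;
  le_refl : forall a, le a a;
  le_trans : forall a b c, le a b -> le b c -> le a c;
  le_antisym : forall a b, le a b -> le b a -> a = b;
  sup_ub : forall (S : car -> Prop) a, S a -> le a (sup S);
  sup_least : forall (S : car -> Prop) b, (forall a, S a -> le a b) -> le (sup S) b;
  inf_lb : forall (S : car -> Prop) a, S a -> le (inf S) a;
  inf_greatest : forall (S : car -> Prop) b, (forall a, S a -> le b a) -> le b (inf S);
  mulC : forall a b, mul a b = mul b a;
  mulA : forall a b c, mul a (mul b c) = mul (mul a b) c;
  mul1 : forall a, mul a one = a;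
  one_top : forall a, le a one;
  mul_sup : forall a (I : Type) (b : I -> car),
      mul a (sup (fun c => exists i, c = b i)) = sup (fun c => exists i, c = mul a (b i));
  adjunction : forall a b c, le (mul a b) c <-> le a (res b c)
}.

Section Ops.
Context {L : CRL}.

Definition Sup (I : Type) (f : I -> L) : L := sup L (fun c => exists i, c = f i).
Definition Inf (I : Type) (f : I -> L) : L := inf L (fun c => exists i, c = f i).

Definition phiE (X Y : Type) (phi : X -> Y -> L) (mu : X -> L) : Y -> L :=
  fun y => Sup (fun x : X => mul L (mu x) (phi x y)).
Definition phiA (X Y : Type) (phi : X -> Y -> L) (lam : Y -> L) : X -> L :=
  fun x => Inf (fun y : Y => res L (phi x y) (lam y)).

Definition Kphi (X Y : Type) (phi : X -> Y -> L) (mu : X -> L) : Prop :=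
  phiA phi (phiE phi mu) = mu.

Definition restrC (X Y : Type) (Y' : Y -> Prop) (phi : X -> Y -> L)
  : X -> {y : Y | Y' y} -> L := fun x y => phi x (proj1_sig y).
Definition restrF (Y : Type) (Y' : Y -> Prop) (lam : Y -> L)
  : {y : Y | Y' y} -> L := fun y => lam (proj1_sig y).
End Ops.

(* phi^exists and phi^forall form a Galois connection between L^X and L^Y,
   so phi^forall phi^exists phi^forall = phi^forall and
   phi^exists phi^forall phi^exists = phi^exists.  Restricting to Y' only
   forgets meetands, hence phi^forall lambda <= (phi_{X,Y'})^forall lambda_{Y'}
   and phi^exists of the restricted context is the restriction of phi^exists.
   With these identities each equivalence is a short computation; for
   (iv) => (iii), the closure of mu in phi_{X,Y'} is squeezed between the
   closure of mu in phi and the closure, in phi_{X,Y'}, of that phi-closed set. *)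

From Stdlib Require Import FunctionalExtensionality.

Section GaloisConnection.
Context {L : CRL}.

Definition fle {T : Type} (f g : T -> L) : Prop := forall t, le L (f t) (g t).

Lemma fle_refl {T : Type} (f : T -> L) : fle f f.
Proof. intro; apply le_refl. Qed.

Lemma fle_trans {T : Type} (f g h : T -> L) : fle f g -> fle g h -> fle f h.
Proof. intros Hfg Hgh t; eapply le_trans; eauto. Qed.

Lemma fle_antisym {T : Type} (f g : T -> L) : fle f g -> fle g f -> f = g.
Proof.
  intros Hfg Hgf; apply functional_extensionality; intro t; apply le_antisym; auto.
Qed.

Lemma Sup_le (I : Type) (f : I -> L) (b : L) :
  le L (Sup f) b <-> forall i, le L (f i) b.
Proof.
  split.
  - intros Hle i; apply le_trans with (Sup f); [apply sup_ub; exists i; reflexivity | exact Hle].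
  - intros Hle; apply sup_least; intros a [i ->]; auto.
Qed.

Lemma le_Inf (I : Type) (f : I -> L) (b : L) :
  le L b (Inf f) <-> forall i, le L b (f i).
Proof.
  split.
  - intros Hle i; apply le_trans with (Inf f); [exact Hle | apply inf_lb; exists i; reflexivity].
  - intros Hle; apply inf_greatest; intros a [i ->]; auto.
Qed.

Variables (X Y : Type) (phi : X -> Y -> L).

Lemma phiE_galois (mu : X -> L) (lam : Y -> L) :
  fle (phiE phi mu) lam <-> fle mu (phiA phi lam).
Proof.
  unfold fle, phiE, phiA; split.
  - intros Hle x; apply le_Inf; intro y; apply adjunction.
    exact (proj1 (Sup_le _ _ _) (Hle y) x).
  - intros Hle y; apply Sup_le; intro x; apply adjunction.
    exact (proj1 (le_Inf _ _ _) (Hle x) y).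
Qed.

Lemma le_phiA_phiE (mu : X -> L) : fle mu (phiA phi (phiE phi mu)).
Proof. apply phiE_galois, fle_refl. Qed.

Lemma phiE_phiA_le (lam : Y -> L) : fle (phiE phi (phiA phi lam)) lam.
Proof. apply phiE_galois, fle_refl. Qed.

Lemma phiA_mono (lam1 lam2 : Y -> L) :
  fle lam1 lam2 -> fle (phiA phi lam1) (phiA phi lam2).
Proof.
  intro Hle; apply phiE_galois; eapply fle_trans; [apply phiE_phiA_le | exact Hle].
Qed.

Lemma phiE_mono (mu1 mu2 : X -> L) :
  fle mu1 mu2 -> fle (phiE phi mu1) (phiE phi mu2).
Proof.
  intro Hle; apply phiE_galois; eapply fle_trans; [exact Hle | apply le_phiA_phiE].
Qed.

Lemma phiA_phiE_phiA (lam : Y -> L) :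
  phiA phi (phiE phi (phiA phi lam)) = phiA phi lam.
Proof.
  apply fle_antisym; [apply phiA_mono, phiE_phiA_le | apply le_phiA_phiE].
Qed.

Lemma phiE_phiA_phiE (mu : X -> L) :
  phiE phi (phiA phi (phiE phi mu)) = phiE phi mu.
Proof.
  apply fle_antisym; [apply phiE_phiA_le | apply phiE_mono, le_phiA_phiE].
Qed.

Lemma Kphi_phiA_phiE (mu : X -> L) : Kphi phi (phiA phi (phiE phi mu)).
Proof. unfold Kphi; rewrite phiE_phiA_phiE; reflexivity. Qed.

End GaloisConnection.

Section Restriction.
Context {L : CRL}.
Variables (X Y : Type) (phi : X -> Y -> L) (Y' : Y -> Prop).

Let phi' := restrC Y' phi.

Lemma phiE_restrC (mu : X -> L) : phiE phi' mu = restrF Y' (phiE phi mu).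
Proof. reflexivity. Qed.

Lemma phiA_le_phiA_restrC (lam : Y -> L) :
  fle (phiA phi lam) (phiA phi' (restrF Y' lam)).
Proof.
  intro x; apply le_Inf; intros [y Hy]; apply inf_lb; exists y; reflexivity.
Qed.

Lemma reducible_iff_restr_closure :
  (forall lam : Y -> L, exists lam', phiA phi lam = phiA phi' lam') <->
  (forall lam : Y -> L,
      phiA phi lam = phiA phi' (restrF Y' (phiE phi (phiA phi lam)))).
Proof.
  split.
  - intros Hred lam; destruct (Hred lam) as [lam' Hlam].
    rewrite <- phiE_restrC, Hlam; symmetry; apply phiA_phiE_phiA.
  - intros Hcl lam; eexists; apply Hcl.
Qed.

Lemma restr_closure_iff_closure_eq :
  (forall lam : Y -> L,
      phiA phi lam = phiA phi' (restrF Y' (phiE phi (phiA phi lam)))) <->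
  (forall mu : X -> L, phiA phi (phiE phi mu) = phiA phi' (phiE phi' mu)).
Proof.
  split.
  - intros Hcl mu; rewrite Hcl, phiE_phiA_phiE; reflexivity.
  - intros Hcl lam; rewrite <- phiE_restrC, <- Hcl; symmetry; apply phiA_phiE_phiA.
Qed.

Lemma closure_le_restr_closure (mu : X -> L) :
  fle (phiA phi (phiE phi mu)) (phiA phi' (phiE phi' mu)).
Proof. rewrite phiE_restrC; apply phiA_le_phiA_restrC. Qed.

(* Only the second half of (iv) is needed for (iii): the first half follows. *)
Lemma closure_eq_of_Kphi_restr_fixed :
  (forall mu : X -> L, Kphi phi mu -> phiA phi' (phiE phi' mu) = mu) ->
  forall mu : X -> L, phiA phi (phiE phi mu) = phiA phi' (phiE phi' mu).
Proof.
  intros Hfix mu; apply fle_antisym; [apply closure_le_restr_closure |].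
  rewrite <- (Hfix _ (Kphi_phiA_phiE _ _ phi mu)).
  apply phiA_mono, phiE_mono, le_phiA_phiE.
Qed.

Lemma closure_eq_iff_Kphi :
  (forall mu : X -> L, phiA phi (phiE phi mu) = phiA phi' (phiE phi' mu)) <->
  (forall mu : X -> L, Kphi phi mu <-> Kphi phi' mu) /\
  (forall mu : X -> L, Kphi phi mu -> phiA phi' (phiE phi' mu) = mu).
Proof.
  split.
  - intros Hcl; split.
    + intro mu; unfold Kphi; rewrite Hcl; tauto.
    + intros mu HK; rewrite <- Hcl; exact HK.
  - intros [_ Hfix]; exact (closure_eq_of_Kphi_restr_fixed Hfix).
Qed.

End Restriction.

Theorem mainTheorem5 (L : CRL) (X Y : Type) (phi : X -> Y -> L) (Y' : Y -> Prop) :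
  let phi' := restrC Y' phi in
  (* (i) <-> (ii) *)
  ((forall lam : Y -> L, exists lam' : {y : Y | Y' y} -> L,
        phiA phi lam = phiA phi' lam')
   <->
   (forall lam : Y -> L,
        phiA phi lam = phiA phi' (restrF Y' (phiE phi (phiA phi lam)))))
  /\
  (* (ii) <-> (iii) *)
  ((forall lam : Y -> L,
        phiA phi lam = phiA phi' (restrF Y' (phiE phi (phiA phi lam))))
   <->
   (forall mu : X -> L, phiA phi (phiE phi mu) = phiA phi' (phiE phi' mu)))
  /\
  (* (iii) <-> (iv) *)
  ((forall mu : X -> L, phiA phi (phiE phi mu) = phiA phi' (phiE phi' mu))
   <->
   ((forall mu : X -> L, Kphi phi mu <-> Kphi phi' mu)
    /\ (forall mu : X -> L, Kphi phi mu -> phiA phi' (phiE phi' mu) = mu))).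
Proof.
  intro phi'; split; [| split].
  - exact (reducible_iff_restr_closure _ _ phi Y').
  - exact (restr_closure_iff_closure_eq _ _ phi Y').
  - exact (closure_eq_iff_Kphi _ _ phi Y').
Qed.
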